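(* Let $I$ be an index set of non-measurable cardinality and $H$ the group $\mathbb Z^{(I)}$ with the topology of pointwise convergence on $\mathbb Z^I$. Let $\bar t\in\widehat H\subseteq\mathbb T^I$ and $i\in I$ with $\bar t(i)\neq0$. Then for each continuity subset $F$ for $\bar t$ there is $\bar x\in F$ with $\bar x(i)\neq0$.
   Context: $\mathbb Z^{(I)}$ is the group of finitely supported functions $I\to\mathbb Z$, paired with $\mathbb Z^I$ by $\langle\bar g,\bar x\rangle=\sum_i\bar g(i)\bar x(i)$; $H$ carries the weakest topology making all maps $\bar g\mapsto\langle\bar g,\bar x\rangle\in\mathbb Z$ ($\mathbb Z$ discrete) continuous. $\mathbb T=\mathbb R/\mathbb Z$; an element $\bar t\in\mathbb T^I$ is identified with the homomorphism $\bar g\mapsto\langle\bar g,\bar t\rangle=\sum_i\bar g(i)\bar t(i)$, and $\widehat H$ (continuous homomorphisms $H\to\mathbb T$) is thereby a subgroup of $\mathbb T^I$. For $\bar t\in\widehat H$, a continuity subset for $\bar t$ is a finite set $F=\{\bar x_1,\dots,\bar x_m\}\subseteq\mathbb Z^I$, minimal under inclusion, such that every $\bar g\in H$ with $\langle\bar g,\bar x_j\rangle=0$ for all $j$ satisfies $\langle\bar g,\bar t\rangle=0$. *)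

From HB Require Import structures.
From mathcomp Require Import all_boot all_order all_algebra.
From mathcomp Require Import finmap.
From mathcomp Require Import boolp classical_sets cardinality reals.
Set Implicit Arguments. Unset Strict Implicit. Unset Printing Implicit Defensive.
Import Order.TTheory GRing.Theory Num.Theory.
Local Open Scope classical_set_scope.
Local Open Scope ring_scope.

Definition cc_ultrafilter (I : Type) (U : set (set I)) : Prop :=
  [/\ U setT, ~ U set0,
      (forall A B, U A -> A `<=` B -> U B),
      (forall A, U A \/ U (~` A)) &
      (forall A : nat -> set I, (forall n, U (A n)) -> U (\bigcap_n A n))].

(* I has non-measurable (non-Ulam-measurable) cardinality: every countably
   complete ultrafilter on I is principal. *)
Definition nonmeasurable (I : Type) : Prop :=
  forall U : set (set I), cc_ultrafilter U -> exists i : I, U [set i].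

Definition Hgrp (I : choiceType) := {fsfun I -> int with 0%R}.

Definition pairZ (I : choiceType) (g : Hgrp I) (x : I -> int) : int :=
  \sum_(i <- finsupp g) g i * x i.

(* <g, t> for t in R^I (representing T^I = (R/Z)^I), computed in R. *)
Definition pairR (R : realType) (I : choiceType) (g : Hgrp I) (t : I -> R) : R :=
  \sum_(i <- finsupp g) (g i)%:~R * t i.

Definition zeroT (R : realType) (y : R) : Prop := exists z : int, y = z%:~R.

(* t : I -> R, viewed in T^I, is a continuous character of H, where H carries
   the weakest topology making all g |-> <g,x> (x in Z^I, Z discrete)
   continuous, and T carries its metric d(a,b) = min_z |a - b - z|.
   This is continuity at every point g, written with the canonical
   neighbourhood bases of both topologies. *)
Definition in_dual (R : realType) (I : choiceType) (t : I -> R) : Prop :=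
  forall (g : Hgrp I) (e : R), 0 < e ->
    exists S : set (I -> int), finite_set S /\
      forall h : Hgrp I, (forall x, S x -> pairZ h x = pairZ g x) ->
        exists z : int, `|pairR h t - pairR g t - z%:~R| < e.

Definition annihil_implies (R : realType) (I : choiceType)
    (F : set (I -> int)) (t : I -> R) : Prop :=
  forall g : Hgrp I, (forall x, F x -> pairZ g x = 0) -> zeroT (pairR g t).

Definition continuity_subset (R : realType) (I : choiceType)
    (t : I -> R) (F : set (I -> int)) : Prop :=
  [/\ finite_set F, annihil_implies F t &
      forall F', F' `<` F -> ~ annihil_implies F' t].

From HB Require Import structures.
From mathcomp Require Import all_boot all_order all_algebra.
From mathcomp Require Import finmap.
From mathcomp Require Import boolp classical_sets cardinality reals.
Set Implicit Arguments. Unset Strict Implicit.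
Import Order.TTheory GRing.Theory Num.Theory.
Local Open Scope classical_set_scope.
Local Open Scope ring_scope.

(* Pairing with the unit vector [e_i] evaluates at [i]: if every [x] in [F]
   vanished at [i], then [e_i] would be annihilated by [F], forcing
   [t i = <e_i, t>] to be zero in T. *)

Section UnitVector.

Variables (I : choiceType) (i : I).

Definition unit_vec : Hgrp I := [fsfun [fsfun] with i |-> 1%:Z].

Lemma finsupp_unit_vec : finsupp unit_vec = [fset i]%fset.
Proof.
rewrite finsupp_with /= finsupp0.
by apply/fsetP => j; rewrite !inE orbF.
Qed.

Lemma pairZ_unit_vec (x : I -> int) : pairZ unit_vec x = x i.
Proof. by rewrite /pairZ finsupp_unit_vec big_seq_fset1 fsfun_with mul1r. Qed.

Lemma pairR_unit_vec (R : realType) (t : I -> R) : pairR unit_vec t = t i.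
Proof. by rewrite /pairR finsupp_unit_vec big_seq_fset1 fsfun_with mul1r. Qed.

End UnitVector.

Lemma annihil_implies_support (R : realType) (I : choiceType)
    (F : set (I -> int)) (t : I -> R) (i : I) :
  annihil_implies F t -> ~ zeroT (t i) -> exists2 x, F x & x i != 0.
Proof.
move=> annF t_i_nz; apply: contrapT => F_vanish_at_i; apply: t_i_nz.
rewrite -(pairR_unit_vec i); apply: annF => x Fx.
rewrite pairZ_unit_vec; apply/eqP; apply: contrapT => x_i_nz.
by apply: F_vanish_at_i; exists x; last exact/negP.
Qed.

Theorem lemma4p9 (R : realType) (I : choiceType) (t : I -> R) (i : I)
    (F : set (I -> int)) :
  nonmeasurable I -> in_dual t -> ~ zeroT (t i) ->
  continuity_subset t F -> exists2 x : I -> int, F x & x i != 0.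
Proof.
move=> _ _ t_i_nz [_ annF _].
exact: (annihil_implies_support annF t_i_nz).
Qed.
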